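(* Let $\mathcal{B}$ be a complete topological ring and let $\mathrm{e}\colon\mathcal{B}\to\mathcal{B}\{T\}$ be a restricted exponential homomorphism. Then the compositions $\varphi=\pi_{(1)}\circ\mathrm{e}\colon\mathcal{B}\to\mathcal{B}$ and $\psi=\pi_{(-1)}\circ\mathrm{e}\colon\mathcal{B}\to\mathcal{B}$ are continuous ring automorphisms of $\mathcal{B}$ inverse to each other, where $\pi_{(\pm1)}\colon\mathcal{B}\{T\}\to\mathcal{B}$ is the continuous $\mathcal{B}$-algebra homomorphism $\sum_ib_iT^i\mapsto\sum_ib_i(\pm1)^i$.
   Context: Conventions: topological rings are linearly topologized with a countable fundamental system of open ideals; homomorphisms are continuous; complete means the canonical map to $\varprojlim_{\mathfrak{a}}\mathcal{B}/\mathfrak{a}$ (open ideals, discrete quotients) is a topological isomorphism. $\mathcal{B}\{T\}$, $\mathcal{B}\{T,T'\}$ denote restricted power series over $\mathcal{B}$ (coefficients converging to $0$, so the sums above converge), topologized by the ideals of series with all coefficients in a given open ideal. A restricted exponential homomorphism is a continuous ring homomorphism $\mathrm{e}\colon\mathcal{B}\to\mathcal{B}\{T\}$, $\mathrm{e}(b)=\sum_i\mathrm{e}_i(b)T^i$, with $\mathrm{e}_0=\mathrm{id}$ and $\sum_{i,j}\mathrm{e}_j(\mathrm{e}_i(b))T'^jT^i=\sum_\ell\mathrm{e}_\ell(b)(T+T')^\ell$ for all $b$. *)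

From HB Require Import structures.
From mathcomp Require Import all_boot all_order all_algebra.
Set Implicit Arguments. Unset Strict Implicit. Unset Printing Implicit Defensive.
Import GRing.Theory.
Local Open Scope ring_scope.

(* A (commutative) ring B linearly topologized by a countable fundamental
   system of open ideals, taken (w.l.o.g.) decreasing: a 0 ⊇ a 1 ⊇ ... .
   Ideals are represented as predicates B -> Prop. *)

Definition is_ideal (B : comPzRingType) (I : B -> Prop) : Prop :=
  [/\ I 0, (forall x y, I x -> I y -> I (x - y)) & (forall r x, I x -> I (r * x))].

Definition lin_top (B : comPzRingType) (a : nat -> B -> Prop) : Prop :=
  (forall n, is_ideal (a n)) /\ (forall n x, a n.+1 x -> a n x).

(* Completeness: the canonical map B -> lim_n B / a n is bijective
   (it is then automatically a topological isomorphism).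
   Injective: separatedness; surjective: every compatible family of
   representatives (x_{n+1} = x_n mod a n) lifts. *)
Definition complete (B : comPzRingType) (a : nat -> B -> Prop) : Prop :=
  (forall x : B, (forall n, a n x) -> x = 0) /\
  (forall x : nat -> B, (forall n, a n (x n.+1 - x n)) ->
     exists y : B, forall n, a n (y - x n)).

Definition continuous_top (B : comPzRingType) (a : nat -> B -> Prop) (f : B -> B) : Prop :=
  forall (x : B) (n : nat), exists m : nat, forall y : B, a m (y - x) -> a n (f y - f x).

Definition restricted (B : comPzRingType) (a : nat -> B -> Prop) (u : nat -> B) : Prop :=
  forall n, exists N, forall i, (N <= i)%N -> a n (u i).

Definition series_to (B : comPzRingType) (a : nat -> B -> Prop) (u : nat -> B) (s : B) : Prop :=
  forall n, exists N, forall k, (N <= k)%N -> a n (\sum_(i < k) u i - s).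

Definition ring_hom (B : comPzRingType) (f : B -> B) : Prop :=
  [/\ forall x y, f (x + y) = f x + f y, forall x y, f (x * y) = f x * f y & f 1 = 1].

(* A restricted exponential homomorphism  e : B -> B{T},  e b = sum_i (e b i) T^i.
   - e b is a restricted power series;
   - e is continuous for the topology on B{T} given by the ideals a n {T};
   - e is a ring homomorphism (addition/Cauchy product/unit coefficientwise);
   - e_0 = id;
   - sum_{i,j} e_j(e_i b) T'^j T^i = sum_l e_l(b) (T+T')^l in B{T,T'}, i.e.
     comparing the coefficients of T'^j T^i: e_j(e_i b) = C(i+j,i) e_{i+j}(b). *)
Definition restricted_exp_hom (B : comPzRingType) (a : nat -> B -> Prop)
    (e : B -> nat -> B) : Prop :=
  [/\ forall b, restricted a (e b),
      forall (x : B) (n : nat), exists m : nat,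
        forall y : B, a m (y - x) -> forall i, a n (e y i - e x i),
      forall b c i, e (b + c) i = e b i + e c i &
      forall b c i, e (b * c) i = \sum_(j < i.+1) e b j * e c (i - j)%N] /\
  [/\ forall i, e 1 i = (i == 0%N)%:R,
      forall b, e b 0%N = b &
      forall b i j, e (e b i) j = 'C(i + j, i)%:R * e b (i + j)%N].

(* Substituting T := c in e b is a continuous ring endomorphism of B for any c,
   since e is continuous and the coefficients of a product are Cauchy products.
   If moreover e c = c (as for c = 1 and c = -1), then e_j commutes with
   multiplication by powers of c, and the law e_j (e_i b) = C(i+j, i) e_(i+j) b
   turns sum_j d^j e_j (sum_i c^i e_i b) into sum_l (c + d)^l e_l b, which is
   e_0 b = b when c + d = 0. *)
From HB Require Import structures.
From mathcomp Require Import all_boot all_order all_algebra.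
From mathcomp Require Import zify.
From Stdlib Require Import IndefiniteDescription.
Set Implicit Arguments. Unset Strict Implicit.
Import GRing.Theory.
Local Open Scope ring_scope.

Lemma sum_triangle (V : nmodType) (k : nat) (f : nat -> nat -> V) :
  \sum_(l < k) \sum_(i < l.+1) f i (l - i)%N = \sum_(i < k) \sum_(j < k - i) f i j.
Proof.
elim: k => [|k IHk]; first by rewrite !big_ord0.
rewrite big_ord_recr /= IHk [RHS]big_ord_recr /= subSnn big_ord1.
rewrite [in RHS](eq_bigr (fun i : 'I_k => \sum_(j < k - i) f i j + f i (k - i)%N)).
  by rewrite big_split /= [in LHS]big_ord_recr /= subnn addrA.
by move=> i _; rewrite subSn 1?big_ord_recr // ltnW.
Qed.

Lemma sum_triangle_binomial (R : comPzRingType) (c d : R) (u : nat -> R) (k : nat) :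
  \sum_(i < k) \sum_(j < k - i) c ^+ i * d ^+ j * ('C(i + j, i)%:R * u (i + j)%N) =
  \sum_(l < k) (c + d) ^+ l * u l.
Proof.
rewrite -(sum_triangle k (fun i j => c ^+ i * d ^+ j * ('C(i + j, i)%:R * u (i + j)%N))).
apply: eq_bigr => l _.
rewrite addrC exprDn mulr_suml; apply: eq_bigr => i _.
rewrite subnKC; last by rewrite -ltnS.
by rewrite mulrA mulr_natr (mulrC (c ^+ i)).
Qed.

Section LinearTopology.
Variables (B : comPzRingType) (a : nat -> B -> Prop).
Hypothesis Ha : lin_top a.

Lemma ideal0 n : a n 0. Proof. by case: (Ha.1 n). Qed.

Lemma idealB n x y : a n x -> a n y -> a n (x - y).
Proof. by case: (Ha.1 n) => _ + _; apply. Qed.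

Lemma idealN n x : a n x -> a n (- x).
Proof. by move=> ax; rewrite -sub0r; apply: idealB (ideal0 n) ax. Qed.

Lemma idealD n x y : a n x -> a n y -> a n (x + y).
Proof. by move=> ax ay; rewrite -[y]opprK; apply: idealB ax (idealN ay). Qed.

Lemma idealMl n r x : a n x -> a n (r * x).
Proof. by case: (Ha.1 n) => _ _; apply. Qed.

Lemma idealMr n r x : a n x -> a n (x * r).
Proof. by rewrite mulrC; apply: idealMl. Qed.

Lemma ideal_sum n I (r : seq I) (P : pred I) (F : I -> B) :
  (forall i, P i -> a n (F i)) -> a n (\sum_(i <- r | P i) F i).
Proof. by move=> aF; apply: (big_ind (a n)); [apply: ideal0 | apply: idealD |]. Qed.

Lemma ideal_subC n x y : a n (x - y) -> a n (y - x).
Proof. by move/idealN; rewrite opprB. Qed.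

Lemma ideal_sub_trans n y x z : a n (x - y) -> a n (y - z) -> a n (x - z).
Proof. by move=> axy ayz; have := idealD axy ayz; rewrite addrA subrK. Qed.

Lemma ideal_partial_sumB n (u : nat -> B) N k : (N <= k)%N ->
  (forall i, (N <= i < k)%N -> a n (u i)) ->
  a n (\sum_(i < k) u i - \sum_(i < N) u i).
Proof.
move=> leNk au; rewrite -!(big_mkord xpredT) (@big_cat_nat _ _ _ N 0 k _ _ (leq0n N) leNk) /=.
rewrite addrAC subrr add0r big_nat_cond.
by apply: ideal_sum => i /andP[/au].
Qed.

Lemma restrictedMl (w u : nat -> B) :
  restricted a u -> restricted a (fun i => w i * u i).
Proof.
by move=> ru n; have [N au] := ru n; exists N => i /au; apply: idealMl.
Qed.

Lemma series_to_cong n (u v : nat -> B) s t :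
  (forall i, a n (u i - v i)) -> series_to a u s -> series_to a v t -> a n (s - t).
Proof.
move=> auv us vt; have [N1 uN1] := us n; have [N2 vN2] := vt n.
apply: (ideal_sub_trans (ideal_subC (uN1 (N1 + N2)%N (leq_addr _ _)))).
apply: ideal_sub_trans (vN2 (N1 + N2)%N (leq_addl _ _)).
by rewrite -sumrB; apply: ideal_sum.
Qed.

Lemma eq_series_to (u v : nat -> B) s :
  u =1 v -> series_to a u s -> series_to a v s.
Proof.
move=> euv us n; have [N uN] := us n; exists N => k leNk.
by under eq_bigr do rewrite -euv; apply: uN.
Qed.

Lemma series_toD (u v : nat -> B) s t : series_to a u s -> series_to a v t ->
  series_to a (fun i => u i + v i) (s + t).
Proof.
move=> us vt n; have [N1 uN1] := us n; have [N2 vN2] := vt n.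
exists (maxn N1 N2) => k; rewrite geq_max => /andP[leN1k leN2k].
by rewrite big_split /= opprD addrACA; apply: idealD; [apply: uN1 | apply: vN2].
Qed.

Lemma series_to_cauchy (u v : nat -> B) s t : restricted a u -> restricted a v ->
  series_to a u s -> series_to a v t ->
  series_to a (fun l => \sum_(i < l.+1) u i * v (l - i)%N) (s * t).
Proof.
move=> ru rv us vt n.
have [N1 uN1] := ru n; have [N2 vN2] := rv n.
have [N3 uN3] := us n; have [N4 vN4] := vt n.
exists (N1 + N2 + N3 + N4)%N => k lek.
rewrite (sum_triangle k (fun i j => u i * v j)).
under eq_bigr do rewrite -mulr_sumr.
apply: (@ideal_sub_trans _ ((\sum_(i < k) u i) * (\sum_(j < k) v j))).
  rewrite mulr_suml -sumrB; apply: ideal_sum => i _; rewrite -mulrBr.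
  have [ltiN1 | /uN1 au] := ltnP i N1; last exact: idealMr.
  apply/idealMl/ideal_subC/ideal_partial_sumB; first by lia.
  by move=> j /andP[leij _]; apply: vN2; lia.
set U := \sum_(i < k) u i; set V := \sum_(j < k) v j.
have -> : U * V - s * t = (U - s) * V + s * (V - t) by rewrite mulrBl mulrBr addrA subrK.
by apply: idealD; [apply/idealMr/uN3 | apply/idealMl/vN4]; lia.
Qed.

Hypothesis Hc : complete a.

Lemma series_to_unique (u : nat -> B) s t : series_to a u s -> series_to a u t -> s = t.
Proof.
move=> us ut; apply/eqP; rewrite -subr_eq0; apply/eqP/Hc.1 => n.
by apply: series_to_cong us ut => i; rewrite subrr; apply: ideal0.
Qed.

(* The partial sums up to M n form a compatible family, M n being a
   nondecreasing bound past which the terms lie in a n. *)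
Lemma series_to_exists (u : nat -> B) : restricted a u -> exists s, series_to a u s.
Proof.
move=> ru; have [N au] := functional_choice _ ru.
pose M n := (\sum_(k < n.+1) N k)%N.
have MS n : M n.+1 = (M n + N n.+1)%N by rewrite /M big_ord_recr.
have leNM n : (N n <= M n)%N by case: n => [|n]; rewrite ?MS ?leq_addl // /M big_ord1.
have tailM n k : (M n <= k)%N -> a n (\sum_(i < k) u i - \sum_(i < M n) u i).
  by move=> leMk; apply: ideal_partial_sumB => // i /andP[/(leq_trans (leNM n)) /au].
have leMS n : (M n <= M n.+1)%N by rewrite MS leq_addr.
have [s Hs] := Hc.2 (fun n => \sum_(i < M n) u i) (fun n => tailM n _ (leMS n)).
by exists s => n; exists (M n) => k /tailM /ideal_sub_trans; apply; apply: ideal_subC.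
Qed.

End LinearTopology.

Section RestrictedExponential.
Variables (B : comPzRingType) (a : nat -> B -> Prop) (e : B -> nat -> B).
Hypotheses (Ha : lin_top a) (Hc : complete a) (He : restricted_exp_hom a e).

Lemma exp_restricted b : restricted a (e b).
Proof. by case: He => [[]]. Qed.

Lemma exp_continuous x n :
  exists m, forall y, a m (y - x) -> forall i, a n (e y i - e x i).
Proof. by case: He => [[_ ]]. Qed.

Lemma expD b c i : e (b + c) i = e b i + e c i.
Proof. by case: He => [[]]. Qed.

Lemma expM b c i : e (b * c) i = \sum_(j < i.+1) e b j * e c (i - j)%N.
Proof. by case: He => [[]]. Qed.

Lemma exp1 i : e 1 i = (i == 0%N)%:R.
Proof. by case: He => _ []. Qed.

Lemma exp_coef0 b : e b 0%N = b.
Proof. by case: He => _ []. Qed.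

Lemma exp_exp b i j : e (e b i) j = 'C(i + j, i)%:R * e b (i + j)%N.
Proof. by case: He => _ []. Qed.

Lemma exp0 j : e 0 j = 0.
Proof. by apply: (@addrI _ (e 0 j)); rewrite -expD !addr0. Qed.

Lemma expN x j : e (- x) j = - e x j.
Proof. by apply: (@addrI _ (e x j)); rewrite -expD !subrr exp0. Qed.

Lemma exp_sum j I (r : seq I) (P : pred I) (F : I -> B) :
  e (\sum_(i <- r | P i) F i) j = \sum_(i <- r | P i) e (F i) j.
Proof. by apply: (big_morph (e^~ j)) => [x y|]; rewrite ?expD ?exp0. Qed.

Definition exp_const (c : B) := forall j, (0 < j)%N -> e c j = 0.

Lemma exp_const1 : exp_const 1.
Proof. by case=> // j _; rewrite exp1. Qed.

Lemma exp_constN c : exp_const c -> exp_const (- c).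
Proof. by move=> Cc j /Cc; rewrite expN => ->; rewrite oppr0. Qed.

Lemma exp_constMl c x j : exp_const c -> e (c * x) j = c * e x j.
Proof.
move=> Cc; rewrite expM big_ord_recl exp_coef0 subn0 big1 ?addr0 // => i _.
by rewrite Cc ?mul0r.
Qed.

Lemma exp_constX c i : exp_const c -> exp_const (c ^+ i).
Proof.
move=> Cc; elim: i => [|i IHi]; first exact: exp_const1.
by move=> j /IHi; rewrite exprS exp_constMl // => ->; rewrite mulr0.
Qed.

Section Evaluation.
Variables (c : B) (F : B -> B).
Hypothesis HF : forall b, series_to a (fun i => c ^+ i * e b i) (F b).

Lemma exp_eval_ring_hom : ring_hom F.
Proof.
have Rc b : restricted a (fun i => c ^+ i * e b i).
  exact: (restrictedMl Ha (fun i => c ^+ i) (exp_restricted b)).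
split=> [x y | x y |].
- apply: (series_to_unique Ha Hc (HF (x + y))).
  by apply: eq_series_to (series_toD Ha (HF x) (HF y)) => i; rewrite expD mulrDr.
- apply: (series_to_unique Ha Hc (HF (x * y))).
  apply: eq_series_to (series_to_cauchy Ha (Rc x) (Rc y) (HF x) (HF y)) => l.
  rewrite expM mulr_sumr; apply: eq_bigr => i _.
  by rewrite mulrACA -exprD subnKC // -ltnS.
- apply: (series_to_unique Ha Hc (HF 1)) => n; exists 1%N => -[|k] // _.
  rewrite big_ord_recl big1 => [|i _]; last by rewrite exp1 /= mulr0.
  by rewrite exp1 /= expr0 mulr1 addr0 subrr; apply: ideal0.
Qed.

Lemma exp_eval_continuous : continuous_top a F.
Proof.
move=> x n; have [m em] := exp_continuous x n; exists m => y /em eyx.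
apply: (series_to_cong Ha _ (HF y) (HF x)) => i.
by rewrite -mulrBr; apply: idealMl (eyx i).
Qed.

End Evaluation.

Lemma exp_eval_exists c :
  exists F : B -> B, forall b, series_to a (fun i => c ^+ i * e b i) (F b).
Proof.
apply: (functional_choice (fun b => series_to a (fun i => c ^+ i * e b i))) => b.
exact: (series_to_exists Ha Hc (restrictedMl Ha (fun i => c ^+ i) (exp_restricted b))).
Qed.

Lemma exp_eval_partial c d b k : exp_const c ->
  \sum_(j < k) d ^+ j * e (\sum_(i < k) c ^+ i * e b i) j =
  \sum_(i < k) \sum_(j < k) c ^+ i * d ^+ j * ('C(i + j, i)%:R * e b (i + j)%N).
Proof.
move=> Cc; under eq_bigr do rewrite exp_sum mulr_sumr.
rewrite exchange_big; apply: eq_bigr => i _; apply: eq_bigr => j _.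
rewrite exp_constMl ?exp_exp; last exact: exp_constX.
by rewrite mulrCA mulrA.
Qed.

(* All sums are truncated at K: past it G (F b) and F b are their partial sums
   up to a n and a m respectively (a m being fine enough for e to be continuous
   at F b up to a n), and e_l b lies in a n, which disposes of the terms with
   i + j >= K. *)
Lemma exp_eval_cancel c d F G : exp_const c -> c + d = 0 ->
  (forall b, series_to a (fun i => c ^+ i * e b i) (F b)) ->
  (forall b, series_to a (fun i => d ^+ i * e b i) (G b)) ->
  cancel F G.
Proof.
move=> Cc cd HF HG b; apply/eqP; rewrite -subr_eq0; apply/eqP/Hc.1 => n.
have [m em] := exp_continuous (F b) n.
have [N1 ebN1] := exp_restricted b n.
have [N2 FN2] := HF b m.
have [N3 GN3] := HG (F b) n.
set K := (N1 + N2 + N3).+1; set y := \sum_(i < K) c ^+ i * e b i.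
apply: (ideal_sub_trans Ha (ideal_subC Ha (GN3 K _))); first by lia.
apply: (@ideal_sub_trans _ _ Ha _ (\sum_(j < K) d ^+ j * e y j)).
  rewrite -sumrB; apply: (ideal_sum Ha) => j _; rewrite -mulrBr.
  apply/(idealMl Ha)/(ideal_subC Ha)/em; apply: FN2; lia.
rewrite exp_eval_partial //.
pose f i j := c ^+ i * d ^+ j * ('C(i + j, i)%:R * e b (i + j)%N).
apply: (@ideal_sub_trans _ _ Ha _ (\sum_(i < K) \sum_(j < K - i) f i j)).
  rewrite -sumrB; apply: (ideal_sum Ha) => i _.
  apply: (ideal_partial_sumB Ha (u := f i)); first exact: leq_subr.
  move=> j /andP[leKj _]; apply/(idealMl Ha)/(idealMl Ha)/ebN1.
  by have := ltn_ord i; lia.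
rewrite sum_triangle_binomial cd big_ord_recl expr0 mul1r exp_coef0.
rewrite big1 => [|i _]; last by rewrite expr0n mul0r.
by rewrite addr0 subrr; apply: ideal0.
Qed.

End RestrictedExponential.

Theorem proposition2p11 (B : comPzRingType) (a : nat -> B -> Prop) (e : B -> nat -> B) :
  lin_top a -> complete a -> restricted_exp_hom a e ->
  exists phi psi : B -> B,
    [/\ forall b, series_to a (e b) (phi b),
        forall b, series_to a (fun i => (-1) ^+ i * e b i) (psi b),
        ring_hom phi /\ continuous_top a phi,
        ring_hom psi /\ continuous_top a psi &
        cancel phi psi /\ cancel psi phi].
Proof.
move=> Ha Hc He.
have [phi Hphi] := exp_eval_exists Ha Hc He 1.
have [psi Hpsi] := exp_eval_exists Ha Hc He (-1).
have C1 := exp_const1 He; have CN1 := exp_constN He C1.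
exists phi, psi; split.
- by move=> b; apply: eq_series_to (Hphi b) => i; rewrite expr1n mul1r.
- exact: Hpsi.
- by split; [apply: exp_eval_ring_hom Hphi | apply: exp_eval_continuous Hphi].
- by split; [apply: exp_eval_ring_hom Hpsi | apply: exp_eval_continuous Hpsi].
- by split; [apply: exp_eval_cancel C1 (subrr 1) Hphi Hpsi
            | apply: exp_eval_cancel CN1 (addNr 1) Hpsi Hphi].
Qed.
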